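(* Let $\mathcal{M}$ be a mesh of $\Omega$, $N\ge 2$, $\delta t=T/N$, and consider any solution of the scheme described in the context. For every dual face $\epsilon$ write $|\mathbf{u}^n_\epsilon|^2=\sum_{i=1}^d(u^n_{\epsilon,i})^2$, and define, for $K\in\mathcal{M}$, $\sigma\in\mathcal{E}(K)$ and $0\le n\le N$, $|K|\,(\rho E_k)^n_K=\frac14\sum_{\sigma\in\mathcal{E}(K)}|D_\sigma|\,\rho^n_{D_\sigma}\,|\mathbf{u}^n_\sigma|^2$, and, for $0\le n\le N-1$, $(G_k)^n_{K,\sigma}=-\frac14\sum_{\epsilon\in\mathcal{E}(D_\sigma),\,\epsilon\subset K}F^n_{\sigma,\epsilon}|\mathbf{u}^n_\epsilon|^2+\frac14\sum_{\epsilon\in\mathcal{E}(D_\sigma),\,\epsilon\not\subset K}F^n_{\sigma,\epsilon}|\mathbf{u}^n_\epsilon|^2$. Then for every $0\le n\le N-2$ and every $K\in\mathcal{M}$, $\frac{|K|}{\delta t}\Big[\big(\rho^{n+2}_Ke^{n+2}_K+(\rho E_k)^{n+1}_K\big)-\big(\rho^{n+1}_Ke^{n+1}_K+(\rho E_k)^n_K\big)\Big]+\sum_{\sigma\in\mathcal{E}(K)}\big(F^{n+1}_{K,\sigma}e^{n+1}_\sigma+(G_k)^n_{K,\sigma}\big)+\sum_{\sigma\in\mathcal{E}(K)\cap\mathcal{E}_{\rm int},\,\sigma=K|L}|\sigma|\,\frac{p^{n+1}_K+p^{n+1}_L}{2}\,\mathbf{u}^{n+1}_\sigma\cdot\ma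thbf{n}_{K,\sigma}=0$.
   Context: Let $\Omega\subset\mathbb{R}^d$ ($1\le d\le 3$) be an open bounded connected polyhedral set and $T>0$. A mesh $\mathcal{M}$ of $\Omega$ is a finite family of compact connected cells with pairwise disjoint interiors whose union is $\overline{\Omega}$; cells are intervals ($d=1$), quadrangles ($d=2$) or hexahedra ($d=3$), and the mesh is conforming. $\mathcal{E}(K)$ is the set of faces of $K$, with $\zeta$ elements ($\zeta=2,4,6$ for $d=1,2,3$); $\mathcal{E}$ is the set of faces, $\mathcal{E}_{\rm int}$ the faces shared by two distinct cells (written $\sigma=K|L$), $\mathcal{E}_{\rm ext}=\mathcal{E}\setminus\mathcal{E}_{\rm int}$; $\mathbf{n}_{K,\sigma}$ unit normal to $\sigma$ outward $K$, $(\mathbf{n}_{K,\sigma})_i$ its $i$-th component; $|A|$ Lebesgue measure. Dual mesh: each $K$ is partitioned into half-diamond cells $D_{K,\sigma}$, $\sigma\in\mathcal{E}(K)$, with $|D_{K,\sigma}|=|K|/\zeta$; $D_\sigma=D_{K,\sigma}\cup D_{L,\sigma}$ if $\sigma=K|L$, $D_\sigma=D_{K,\sigma}$ if $\sigma\in\mathcal{E}_{\rm ext}\cap\mathcal{E}(K)$. A dual face $\epsilon=\sigma|\sigma'$ is the common boundary of two half-diamond cells $D_{K,\sigma},D_{K,\sigma'}$ of a same cell $K$ (connectivity of the reference square/cube), written $\epsilon\subset K$; $\mathcal{E}(D_\sigma)$ is the set of dual faces of $D_\sigma$. Time: $t_n=n\delta t$. The scheme: let $\gamma>1$, $\rho_0,e_0\in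 L^\infty(\Omega)$ with $\rho_0>0$, $e_0>0$, and $\mathbf{u}_0\in L^\infty(\Omega)^d$. A solution is a family of reals $\rho^n_K,e^n_K,p^n_K$ ($K\in\mathcal{M}$) and vectors $\mathbf{u}^n_\sigma=(u^n_{\sigma,1},\dots,u^n_{\sigma,d})$ ($\sigma\in\mathcal{E}$), $0\le n\le N$, such that: (i) $\rho^0_K=\frac{1}{|K|}\int_K\rho_0$, $e^0_K=\frac1{|K|}\int_Ke_0$, $\mathbf{u}^0_\sigma=\frac{1}{|D_\sigma|}\int_{D_\sigma}\mathbf{u}_0$, and $p^n_K=(\gamma-1)\rho^n_Ke^n_K$ for all $n$. (ii) Fluxes: for $\sigma=K|L$, $F^n_{K,\sigma}=|\sigma|\rho^n_\sigma\mathbf{u}^n_\sigma\cdot\mathbf{n}_{K,\sigma}$ with $\rho^n_\sigma$ a convex combination of $\rho^n_K,\rho^n_L$; $F^n_{K,\sigma}=0$ if $\sigma\in\mathcal{E}_{\rm ext}$. Dual densities: $\rho^n_{D_\sigma}=(|D_{K,\sigma}|\rho^n_K+|D_{L,\sigma}|\rho^n_L)/|D_\sigma|$ if $\sigma=K|L$, $\rho^n_{D_\sigma}=\rho^n_K$ if $\sigma\in\mathcal{E}_{\rm ext}\cap\mathcal{E}(K)$. Dual fluxes $F^n_{\sigma,\epsilon}$ ($\epsilon\in\mathcal{E}(D_\sigma)$) satisfy: (a) $F^n_{\sigma,\epsilon}=-F^n_{\sigma',\epsilon}$ for $\epsilon=\sigma|\sigma'$; (b) for every $K$ and $\sigma\in\mathcal{E}(K)$,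 $F^n_{K,\sigma}+\sum_{\epsilon\in\mathcal{E}(D_\sigma),\epsilon\subset K}F^n_{\sigma,\epsilon}=\frac1\zeta\sum_{\sigma'\in\mathcal{E}(K)}F^n_{K,\sigma'}$; (c) for $\epsilon\in\mathcal{E}(D_\sigma)$, $\epsilon\subset K$, $F^n_{\sigma,\epsilon}=\sum_{\sigma'\in\mathcal{E}(K)}\xi_{\epsilon,\sigma'}F^n_{K,\sigma'}$ with real coefficients depending only on the relative positions of $\epsilon,\sigma'$ in the cell (fixed, independent of $K$ and the mesh). (iii) For $0\le n\le N-1$ and $K\in\mathcal{M}$: $\frac{|K|}{\delta t}(\rho^{n+1}_K-\rho^n_K)+\sum_{\sigma\in\mathcal{E}(K)}F^n_{K,\sigma}=0$ and $\frac{|K|}{\delta t}(\rho^{n+1}_Ke^{n+1}_K-\rho^n_Ke^n_K)+\sum_{\sigma\in\mathcal{E}(K)}F^n_{K,\sigma}e^n_\sigma+|K|p^n_K(\operatorname{div}\mathbf{u})^n_K=S^n_K$, where $e^n_\sigma$ is a convex combination of $e^n_K,e^n_L$ for $\sigma=K|L$ and $(\operatorname{div}\mathbf{u})^n_K=\frac1{|K|}\sum_{\sigma\in\mathcal{E}(K)}|\sigma|\mathbf{u}^n_\sigma\cdot\mathbf{n}_{K,\sigma}$. (iv) For $0\le n\le N-1$, $1\le i\le d$ and $\sigma=K|L\in\mathcal{E}_{\rm int}$: $\frac{|D_\sigma|}{\delta t}(\rho^{n+1}_{D_\sigma}u^{n+1}_{\sigma,i}-\rho^n_{D_\sigma}u^n_{\sigma,i})+\sum_{\epsilon\in\mathcal{E}(D_\sigma)}F^n_{\sigma,\epsilon}u^n_{\epsilon,i}+|\sigma|(p^{n+1}_L-p^{n+1}_K)(\mathbf{n}_{K,\sigma})_i=0$,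 where for each dual face $\epsilon=\sigma|\sigma'$, $u^n_{\epsilon,i}$ is a single real which is a convex combination of $u^n_{\sigma,i}$ and $u^n_{\sigma',i}$; for $\sigma\in\mathcal{E}_{\rm ext}\cap\mathcal{E}(K)$, $\mathbf{u}^n_\sigma\cdot\mathbf{n}_{K,\sigma}=0$ for all $n$ and the same equation holds with the pressure term replaced by $g^{n+1}_\sigma(\mathbf{n}_{K,\sigma})_i$ for some real $g^{n+1}_\sigma$. (v) $S^0_K=0$ and, for $0\le n\le N-1$, $S^{n+1}_K=\frac12\sum_{i=1}^d\sum_{\sigma\in\mathcal{E}(K)}R^{n+1}_{\sigma,i}$ with $R^{n+1}_{\sigma,i}=\frac12\frac{|D_\sigma|}{\delta t}\rho^{n+1}_{D_\sigma}(u^{n+1}_{\sigma,i}-u^n_{\sigma,i})^2-\frac12\sum_{\epsilon\in\mathcal{E}(D_\sigma)}F^n_{\sigma,\epsilon}(u^n_{\epsilon,i}-u^n_{\sigma,i})^2+(u^{n+1}_{\sigma,i}-u^n_{\sigma,i})\sum_{\epsilon\in\mathcal{E}(D_\sigma)}F^n_{\sigma,\epsilon}(u^n_{\epsilon,i}-u^n_{\sigma,i})$. *)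

From HB Require Import structures.
From mathcomp Require Import all_boot all_order all_algebra.
Set Implicit Arguments. Unset Strict Implicit. Unset Printing Implicit Defensive.
Import Order.TTheory GRing.Theory Num.Theory.
Local Open Scope ring_scope.

(* Local face indices of a cell : 'I_(2*d)  (zeta = 2 d faces per cell).
   Convention of the reference cell [0,1]^d: local faces 2k and 2k+1 are the
   two opposite faces orthogonal to the k-th axis. *)

(* Connectivity of the half-diamond cells of the reference cell: the
   half-diamonds of local faces i and j (i <> j) share a dual face iff the
   faces are not opposite (d = 2, 3); for d = 1 the two half-intervals share
   the midpoint of the cell. *)
Definition adj (d : nat) (i j : 'I_(2 * d)) : bool :=
  (i != j) && ((d == 1)%N || (i./2 != j./2)%N).

Record mesh (R : realFieldType) (d : nat) (Cell Face : finType) := Mesh {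
  (* loc K i = the face of K with local index i; E(K) = its image *)
  loc : Cell -> 'I_(2 * d) -> Face;
  loc_inj : forall K, injective (loc K);
  vol : Cell -> R;
  vol_gt0 : forall K, 0 < vol K;
  area : Face -> R;
  area_gt0 : forall s, 0 < area s;
  nrm : Cell -> Face -> 'I_d -> R;
  nrm_unit : forall K i, \sum_(c < d) (nrm K (loc K i) c) ^+ 2 = 1;
  face_cells : forall s,
    (0 < #|[set K | [exists i, loc K i == s]]| <= 2)%N;
  nrm_opp : forall K L i j, K != L -> loc K i = loc L j ->
    nrm L (loc L j) = (fun c => - nrm K (loc K i) c)
}.

Section MeshDefs.
Context (R : realFieldType) (d : nat) (Cell Face : finType)
        (M : mesh R d Cell Face).

Definition zeta : R := (2 * d)%:R.

Definition faceOf (K : Cell) (s : Face) : bool := [exists i, loc M K i == s].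

Definition cellsOf (s : Face) : {set Cell} := [set K | faceOf K s].

Definition interior (s : Face) : bool := #|cellsOf s| == 2%N.

(* |D_{K,sigma}| = |K| / zeta and |D_sigma| *)
Definition Dvol (s : Face) : R := \sum_(K in cellsOf s) vol M K / zeta.

Definition rhoD (rhoK : Cell -> R) (s : Face) : R :=
  (\sum_(K in cellsOf s) (vol M K / zeta) * rhoK K) / Dvol s.

Definition dotn (v : 'I_d -> R) (K : Cell) (s : Face) : R :=
  \sum_(c < d) v c * nrm M K s c.

Definition sqnorm (v : 'I_d -> R) : R := \sum_(c < d) (v c) ^+ 2.

(* Dual faces epsilon of D_sigma contained in a cell K are parametrised by
   (K, i, j) with loc K i = sigma and adj i j: epsilon = sigma | loc K j.
   A quantity attached to (sigma, epsilon) is a function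
   G : Cell -> 'I_(2d) -> 'I_(2d) -> R.                                     *)
Definition dsumK (G : Cell -> 'I_(2 * d) -> 'I_(2 * d) -> R)
  (K : Cell) (s : Face) : R :=
  \sum_(i | loc M K i == s) \sum_(j | adj i j) G K i j.

Definition dsum (G : Cell -> 'I_(2 * d) -> 'I_(2 * d) -> R) (s : Face) : R :=
  \sum_(K : Cell) dsumK G K s.

Definition Fp (rhoS : Face -> R) (u : Face -> 'I_d -> R)
  (K : Cell) (s : Face) : R :=
  if interior s then area M s * rhoS s * dotn (u s) K s else 0.

Definition divu (u : Face -> 'I_d -> R) (K : Cell) : R :=
  (vol M K)^-1 * \sum_(s | faceOf K s) area M s * dotn (u s) K s.

Definition convex2 (x a b : R) : Prop :=
  exists2 l : R, 0 <= l <= 1 & x = l * a + (1 - l) * b.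

Section Scheme.
Variables (dt : R) (N : nat)
  (rho e p : nat -> Cell -> R) (u : nat -> Face -> 'I_d -> R)
  (rhoS eS : nat -> Face -> R)
  (Fd : nat -> Cell -> 'I_(2 * d) -> 'I_(2 * d) -> R)
  (ue : nat -> Cell -> 'I_(2 * d) -> 'I_(2 * d) -> 'I_d -> R)
  (g : nat -> Face -> R)
  (xi : 'I_(2 * d) -> 'I_(2 * d) -> 'I_(2 * d) -> R).

Definition F n := Fp (rhoS n) (u n).

Definition Rterm (n : nat) (s : Face) (c : 'I_d) : R :=
  2^-1 * (Dvol s / dt) * rhoD (rho n.+1) s * (u n.+1 s c - u n s c) ^+ 2
  - 2^-1 * dsum (fun K i j => Fd n K i j * (ue n K i j c - u n s c) ^+ 2) s
  + (u n.+1 s c - u n s c)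
      * dsum (fun K i j => Fd n K i j * (ue n K i j c - u n s c)) s.

Definition Ssrc (n : nat) (K : Cell) : R :=
  if n is n'.+1 then
    2^-1 * \sum_(c < d) \sum_(s | faceOf K s) Rterm n' s c
  else 0.

Record scheme_solution (gamma : R) : Prop := SchemeSolution {
  sol_eos : forall n K, (n <= N)%N -> p n K = (gamma - 1) * rho n K * e n K;
  sol_rhoS : forall n s K L, (n <= N)%N -> K != L -> faceOf K s -> faceOf L s ->
    convex2 (rhoS n s) (rho n K) (rho n L);
  sol_eS : forall n s K L, (n <= N)%N -> K != L -> faceOf K s -> faceOf L s ->
    convex2 (eS n s) (e n K) (e n L);
  sol_dual_a : forall n K i j, (n <= N)%N -> adj i j ->
    Fd n K i j = - Fd n K j i;
  sol_dual_b : forall n K i, (n <= N)%N ->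
    F n K (loc M K i) + \sum_(j | adj i j) Fd n K i j
    = zeta^-1 * \sum_(s | faceOf K s) F n K s;
  sol_dual_c : forall n K i j, (n <= N)%N -> adj i j ->
    Fd n K i j = \sum_(k < 2 * d) xi i j k * F n K (loc M K k);
  sol_ue_sym : forall n K i j c, (n <= N)%N -> adj i j ->
    ue n K i j c = ue n K j i c;
  sol_ue_cvx : forall n K i j c, (n <= N)%N -> adj i j ->
    convex2 (ue n K i j c) (u n (loc M K i) c) (u n (loc M K j) c);
  sol_mass : forall n K, (n < N)%N ->
    vol M K / dt * (rho n.+1 K - rho n K) + \sum_(s | faceOf K s) F n K s = 0;
  sol_energy : forall n K, (n < N)%N ->
    vol M K / dt * (rho n.+1 K * e n.+1 K - rho n K * e n K)
    + \sum_(s | faceOf K s) F n K s * eS n s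
    + vol M K * p n K * divu (u n) K = Ssrc n K;
  sol_mom_int : forall n s K L c, (n < N)%N -> K != L -> faceOf K s -> faceOf L s ->
    Dvol s / dt * (rhoD (rho n.+1) s * u n.+1 s c - rhoD (rho n) s * u n s c)
    + dsum (fun K' i j => Fd n K' i j * ue n K' i j c) s
    + area M s * (p n.+1 L - p n.+1 K) * nrm M K s c = 0;
  sol_bnd_normal : forall n s K, (n <= N)%N -> ~~ interior s -> faceOf K s ->
    dotn (u n s) K s = 0;
  sol_mom_ext : forall n s K c, (n < N)%N -> ~~ interior s -> faceOf K s ->
    Dvol s / dt * (rhoD (rho n.+1) s * u n.+1 s c - rhoD (rho n) s * u n s c)
    + dsum (fun K' i j => Fd n K' i j * ue n K' i j c) s
    + g n.+1 s * nrm M K s c = 0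
}.

Definition rhoEk (n : nat) (K : Cell) : R :=
  (vol M K)^-1 * (4^-1 * \sum_(s | faceOf K s)
                    Dvol s * rhoD (rho n) s * sqnorm (u n s)).

Definition Gk (n : nat) (K : Cell) (s : Face) : R :=
  - 4^-1 * dsumK (fun K' i j => Fd n K' i j * sqnorm (ue n K' i j)) K s
  + 4^-1 * \sum_(K' | K' != K)
             dsumK (fun K'' i j => Fd n K'' i j * sqnorm (ue n K'' i j)) K' s.

End Scheme.
End MeshDefs.

From HB Require Import structures.
From mathcomp Require Import all_boot all_order all_algebra.
From mathcomp Require Import ring lra zify.
Set Implicit Arguments. Unset Strict Implicit. Unset Printing Implicit Defensive.
Import Order.TTheory GRing.Theory Num.Theory.
Local Open Scope ring_scope.

(* Multiplying the momentum balance on D_sigma by u^{n+1}_sigma and using the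
   mass balance on D_sigma (obtained from the primal one through (ii)(b) and the
   conservativity of the primal fluxes) gives a discrete kinetic energy balance
   on each dual cell, whose remainder is R^{n+1}_sigma.  Half of it is assigned
   to each cell adjacent to sigma: the remainders then add up to the source
   S^{n+1}_K of the internal energy equation, the pressure work p_K (div u)_K
   cancels the p_K part of the pressure gradient term, which leaves the centred
   flux (p_K + p_L) / 2, and the dual fluxes interior to K cancel pairwise by
   (ii)(a). *)

Lemma kinetic_energy_identity (R : realFieldType) (V r' r a b Sf Sw Sw2 P Rt : R) :
  V * (r' - r) + Sf = 0 -> V * (r' * a - r * b) + Sw + P = 0 ->
  Rt = 2^-1 * V * r' * (a - b) ^+ 2 - 2^-1 * (Sw2 + (- (2 * b)) * Sw + b ^+ 2 * Sf)
       + (a - b) * (Sw + (- b) * Sf) ->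
  V * (2^-1 * r' * a ^+ 2 - 2^-1 * r * b ^+ 2) + 2^-1 * Sw2 + P * a + Rt = 0.
Proof.
move=> mass mom ->.
have -> : Sf = - (V * (r' - r)) by lra.
have -> : P = - (V * (r' * a - r * b) + Sw) by lra.
by field.
Qed.

Section DualMesh.
Context (R : realFieldType) (d : nat) (Cell Face : finType)
        (M : mesh R d Cell Face).

Implicit Types (K L : Cell) (s : Face) (G H : Cell -> 'I_(2 * d) -> 'I_(2 * d) -> R).

Lemma eq_dsum G H s : (forall K i j, G K i j = H K i j) -> dsum M G s = dsum M H s.
Proof.
move=> eGH; apply: eq_bigr => K _; apply: eq_bigr => i _; apply: eq_bigr => j _.
exact: eGH.
Qed.

Lemma dsumD G H s :
  dsum M (fun K i j => G K i j + H K i j) s = dsum M G s + dsum M H s.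
Proof.
rewrite -big_split; apply: eq_bigr => K _; rewrite -big_split.
by apply: eq_bigr => i _; rewrite -big_split.
Qed.

Lemma dsumZ (a : R) G s : dsum M (fun K i j => a * G K i j) s = a * dsum M G s.
Proof.
rewrite mulr_sumr; apply: eq_bigr => K _; rewrite mulr_sumr.
by apply: eq_bigr => i _; rewrite mulr_sumr.
Qed.

Lemma dsum_sum (G : 'I_d -> Cell -> 'I_(2 * d) -> 'I_(2 * d) -> R) s :
  dsum M (fun K i j => \sum_(c < d) G c K i j) s = \sum_(c < d) dsum M (G c) s.
Proof.
rewrite [RHS]exchange_big; apply: eq_bigr => K _.
rewrite [RHS]exchange_big; apply: eq_bigr => i _.
by rewrite [RHS]exchange_big.
Qed.

Lemma faceOf_loc K i : faceOf M K (loc M K i).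
Proof. by apply/existsP; exists i. Qed.

Lemma loc_inj_eq K i i0 : (loc M K i == loc M K i0) = (i == i0).
Proof. exact: (inj_eq (@loc_inj _ _ _ _ M K)). Qed.

Lemma dsumK_notin G K s : ~~ faceOf M K s -> dsumK M G K s = 0.
Proof.
move=> Ks; rewrite /dsumK big1 // => i /eqP si.
by move: Ks; rewrite -si faceOf_loc.
Qed.

Lemma dsumK_loc G K i0 :
  dsumK M G K (loc M K i0) = \sum_(j | adj i0 j) G K i0 j.
Proof. by rewrite /dsumK (big_pred1 i0) // => i; rewrite /= loc_inj_eq. Qed.

Lemma sum_dsumK G K :
  \sum_(s | faceOf M K s) dsumK M G K s = \sum_i \sum_(j | adj i j) G K i j.
Proof.
by rewrite [RHS](partition_big (loc M K) (faceOf M K)) // => i _; apply: faceOf_loc.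
Qed.

Lemma adjC (i j : 'I_(2 * d)) : adj i j = adj j i.
Proof. by rewrite /adj eq_sym [(i./2 == _)%N]eq_sym. Qed.

Lemma sum_adj_antisym (A B : 'I_(2 * d) -> 'I_(2 * d) -> R) :
  (forall i j, adj i j -> A i j = - A j i) ->
  (forall i j, adj i j -> B i j = B j i) ->
  \sum_i \sum_(j | adj i j) A i j * B i j = 0.
Proof.
move=> Aanti Bsym.
suff SN : \sum_i \sum_(j | adj i j) A i j * B i j
          = - \sum_i \sum_(j | adj i j) A i j * B i j by lra.
under eq_bigr => i _ do rewrite big_mkcond.
rewrite [LHS]exchange_big -sumrN; apply: eq_bigr => j _.
rewrite big_mkcond -sumrN; apply: eq_bigr => i _ /=.
rewrite adjC; case: ifP => [ji|_]; last by rewrite oppr0.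
have ij : adj i j by rewrite adjC.
by rewrite (Aanti _ _ ij) (Bsym _ _ ij) mulNr.
Qed.

Lemma zeta_gt0 : (0 < d)%N -> 0 < zeta R d.
Proof. by move=> d_gt0; rewrite ltr0n muln_gt0. Qed.

Lemma Dvol_gt0 s : (0 < d)%N -> 0 < Dvol M s.
Proof.
move=> d_gt0; have /andP[/card_gt0P[K Ks] _] := face_cells M s.
rewrite /Dvol (big_setD1 K) //= ltr_pwDl ?divr_gt0 ?vol_gt0 ?zeta_gt0 //.
by apply: sumr_ge0 => L _; rewrite divr_ge0 ?ltW ?vol_gt0 ?zeta_gt0.
Qed.

Lemma interior_neighbour K s : interior M s -> faceOf M K s ->
  exists L0, [/\ L0 != K, faceOf M L0 s &
    forall L, ((L != K) && faceOf M L s) = (L == L0)].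
Proof.
move=> /cards2P[x [y [xy sxy]]].
have inE_s L : faceOf M L s = (L \in [set x; y]) by rewrite -sxy inE.
rewrite inE_s !inE => /orP[]/eqP->.
- exists y; rewrite inE_s !inE eqxx orbT eq_sym xy; split=> // L.
  rewrite inE_s !inE.
  by case: (L =P x) => [->|_]; rewrite ?eqxx ?(negbTE xy).
- exists x; rewrite inE_s !inE eqxx xy; split=> // L.
  rewrite inE_s !inE.
  by case: (L =P y) => [->|_]; rewrite ?eqxx ?orbF ?andbT // eq_sym (negbTE xy).
Qed.

(* The two cells sharing an interior face see opposite normals. *)
Lemma sum_cellsOf_Fp (rhoS : Face -> R) (v : Face -> 'I_d -> R) s :
  \sum_(K in cellsOf M s) Fp M rhoS v K s = 0.
Proof.
rewrite /Fp; case si: (interior M s); last by rewrite big1.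
have /cards2P[x [y [xy sxy]]] := si.
have faceOf_s L : L \in [set x; y] -> faceOf M L s by rewrite -sxy inE.
have /existsP[i /eqP xi] := faceOf_s x (set21 x y).
have /existsP[j /eqP yj] := faceOf_s y (set22 x y).
have ny : nrm M y s = fun c => - nrm M x s c.
  by rewrite -{1}yj (nrm_opp xy (etrans xi (esym yj))) xi.
rewrite sxy big_setU1 ?inE //= big_set1 -mulrDr /dotn ny -big_split /=.
by rewrite big1 ?mulr0 // => c _; rewrite mulrN addrN.
Qed.

Lemma vol_mul_divu (v : Face -> 'I_d -> R) (x : R) K :
  vol M K * x * divu M v K = \sum_(s | faceOf M K s) area M s * x * dotn M (v s) K s.
Proof.
have vK : vol M K != 0 by rewrite gt_eqF ?vol_gt0.
rewrite /divu -mulrA mulrCA mulVKf // mulr_sumr.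
by apply: eq_bigr => s _; rewrite mulrCA mulrA.
Qed.

Lemma rhoEk_diff (dt : R) (rho : nat -> Cell -> R) (u : nat -> Face -> 'I_d -> R) m n K :
  vol M K / dt * (rhoEk M rho u m K - rhoEk M rho u n K)
  = \sum_(s | faceOf M K s) 4^-1 * (Dvol M s / dt) *
      (rhoD M (rho m) s * sqnorm (u m s) - rhoD M (rho n) s * sqnorm (u n s)).
Proof.
have vK : vol M K != 0 by rewrite gt_eqF ?vol_gt0.
rewrite /rhoEk -mulrBr -mulrBr -sumrB [vol M K / dt]mulrC -mulrA mulVKf //.
by rewrite mulrA mulr_sumr; apply: eq_bigr => s _; ring.
Qed.

End DualMesh.

Section Scheme.
Context (R : realFieldType) (d : nat) (Cell Face : finType)
        (M : mesh R d Cell Face).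
Variables (dt : R) (N : nat) (gamma : R)
  (rho e p : nat -> Cell -> R) (u : nat -> Face -> 'I_d -> R)
  (rhoS eS : nat -> Face -> R)
  (Fd : nat -> Cell -> 'I_(2 * d) -> 'I_(2 * d) -> R)
  (ue : nat -> Cell -> 'I_(2 * d) -> 'I_(2 * d) -> 'I_d -> R)
  (g : nat -> Face -> R)
  (xi : 'I_(2 * d) -> 'I_(2 * d) -> 'I_(2 * d) -> R).
Hypothesis sol : scheme_solution M dt N rho e p u rhoS eS Fd ue g xi gamma.
Hypothesis d_gt0 : (0 < d)%N.

Implicit Types (K L : Cell) (s : Face).

Local Notation F := (F M u rhoS).
Local Notation Rterm := (Rterm M dt rho u Fd ue).

Lemma dsumK_Fd n K s : (n < N)%N -> faceOf M K s ->
  dsumK M (Fd n) K s = - (vol M K / zeta R d / dt * (rho n.+1 K - rho n K)) - F n K s.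
Proof.
move=> lt_nN /existsP[i /eqP <-]; rewrite dsumK_loc.
have mass := sol_mass sol K lt_nN.
have := sol_dual_b sol K i (ltnW lt_nN).
rewrite (_ : \sum_(s | faceOf M K s) F n K s = - (vol M K / dt * (rho n.+1 K - rho n K))).
  by move=> dual; lra.
by lra.
Qed.

Lemma dual_mass_balance n s : (n < N)%N ->
  Dvol M s / dt * (rhoD M (rho n.+1) s - rhoD M (rho n) s) + dsum M (Fd n) s = 0.
Proof.
move=> lt_nN.
have Dvol_neq0 : Dvol M s != 0 by rewrite gt_eqF ?Dvol_gt0.
have -> : dsum M (Fd n) s = \sum_(K in cellsOf M s)
    (- (vol M K / zeta R d / dt * (rho n.+1 K - rho n K)) - F n K s).
  rewrite /dsum (bigID (faceOf M ^~ s)) /= [X in _ + X]big1 ?addr0; last first.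
    by move=> K /dsumK_notin ->.
  by apply: eq_big => [K|K Ks]; rewrite ?inE // dsumK_Fd.
rewrite sumrB sum_cellsOf_Fp subr0 /rhoD -mulrBl -sumrB.
rewrite [Dvol M s / dt]mulrC -mulrA [Dvol M s * _]mulrCA mulfV // mulr1 mulr_sumr.
by rewrite -big_split big1 // => K _ /=; ring.
Qed.

Lemma dual_kinetic_balance n s (P : 'I_d -> R) : (n < N)%N ->
  (forall c, Dvol M s / dt * (rhoD M (rho n.+1) s * u n.+1 s c
                              - rhoD M (rho n) s * u n s c)
             + dsum M (fun K i j => Fd n K i j * ue n K i j c) s + P c = 0) ->
  2^-1 * (Dvol M s / dt) * (rhoD M (rho n.+1) s * sqnorm (u n.+1 s)
                            - rhoD M (rho n) s * sqnorm (u n s))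
  + 2^-1 * dsum M (fun K i j => Fd n K i j * sqnorm (ue n K i j)) s
  + \sum_(c < d) P c * u n.+1 s c + \sum_(c < d) Rterm n s c = 0.
Proof.
move=> lt_nN mom.
set V := Dvol M s / dt; set r' := rhoD M (rho n.+1) s; set r := rhoD M (rho n) s.
set Sf := dsum M (Fd n) s.
pose Sw c := dsum M (fun K i j => Fd n K i j * ue n K i j c) s.
pose Sw2 c := dsum M (fun K i j => Fd n K i j * ue n K i j c ^+ 2) s.
have Rterm_E c : Rterm n s c = 2^-1 * V * r' * (u n.+1 s c - u n s c) ^+ 2
    - 2^-1 * (Sw2 c + (- (2 * u n s c)) * Sw c + u n s c ^+ 2 * Sf)
    + (u n.+1 s c - u n s c) * (Sw c + (- u n s c) * Sf).
  have E1 : dsum M (fun K i j => Fd n K i j * (ue n K i j c - u n s c)) s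
      = Sw c + (- u n s c) * Sf.
    by rewrite -dsumZ -dsumD; apply: eq_dsum => K i j; ring.
  have E2 : dsum M (fun K i j => Fd n K i j * (ue n K i j c - u n s c) ^+ 2) s
      = Sw2 c + (- (2 * u n s c)) * Sw c + u n s c ^+ 2 * Sf.
    by rewrite -!dsumZ -!dsumD; apply: eq_dsum => K i j; ring.
  by rewrite /Rterm E1 E2.
pose kin c := V * (2^-1 * r' * u n.+1 s c ^+ 2 - 2^-1 * r * u n s c ^+ 2)
    + 2^-1 * Sw2 c + P c * u n.+1 s c + Rterm n s c.
have : \sum_(c < d) kin c = 0.
  apply: big1 => c _.
  exact: kinetic_energy_identity (dual_mass_balance s lt_nN) (mom c) (Rterm_E c).
rewrite !big_split /=.
have -> : \sum_(c < d) V * (2^-1 * r' * u n.+1 s c ^+ 2 - 2^-1 * r * u n s c ^+ 2)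
    = 2^-1 * V * (r' * sqnorm (u n.+1 s) - r * sqnorm (u n s)).
  by rewrite /sqnorm !mulr_sumr -sumrB mulr_sumr; apply: eq_bigr => c _; ring.
have -> : \sum_(c < d) 2^-1 * Sw2 c
    = 2^-1 * dsum M (fun K i j => Fd n K i j * sqnorm (ue n K i j)) s.
  rewrite -mulr_sumr -dsum_sum; congr (_ * _); apply: eq_dsum => K i j.
  by rewrite /sqnorm mulr_sumr.
done.
Qed.

Lemma sum_nrm_dotn (a : R) (v : 'I_d -> R) K s :
  \sum_(c < d) a * nrm M K s c * v c = a * dotn M v K s.
Proof. by rewrite /dotn mulr_sumr; apply: eq_bigr => c _; ring. Qed.

(* Half of the kinetic balance on D_sigma is assigned to K; the pressure
   gradient term then splits into the centred pressure flux and the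
   contribution of p_K that cancels against the internal energy equation. *)
Lemma face_kinetic_balance n K s : (n < N)%N -> faceOf M K s ->
  4^-1 * (Dvol M s / dt) * (rhoD M (rho n.+1) s * sqnorm (u n.+1 s)
                            - rhoD M (rho n) s * sqnorm (u n s))
  + 2^-1 * \sum_(c < d) Rterm n s c
  + 4^-1 * dsum M (fun K' i j => Fd n K' i j * sqnorm (ue n K' i j)) s
  + (if interior M s then
       \sum_(L | (L != K) && faceOf M L s)
         area M s * ((p n.+1 K + p n.+1 L) / 2) * dotn M (u n.+1 s) K s
     else 0)
  = area M s * p n.+1 K * dotn M (u n.+1 s) K s.
Proof.
move=> lt_nN Ks; case: ifP => [int|ext].
- have [L [LK Ls neighbour]] := interior_neighbour int Ks.
  rewrite (big_pred1 L) //.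
  have KL : K != L by rewrite eq_sym.
  have := dual_kinetic_balance lt_nN (fun c => sol_mom_int sol c lt_nN KL Ks Ls).
  by rewrite sum_nrm_dotn; lra.
- have ext' : ~~ interior M s by rewrite ext.
  have := dual_kinetic_balance lt_nN (fun c => sol_mom_ext sol c lt_nN ext' Ks).
  by rewrite sum_nrm_dotn (sol_bnd_normal sol lt_nN ext' Ks); lra.
Qed.

Lemma cell_kinetic_balance n K : (n < N)%N ->
  \sum_(s | faceOf M K s) 4^-1 * (Dvol M s / dt) *
      (rhoD M (rho n.+1) s * sqnorm (u n.+1 s) - rhoD M (rho n) s * sqnorm (u n s))
  + \sum_(s | faceOf M K s) 2^-1 * \sum_(c < d) Rterm n s c
  + \sum_(s | faceOf M K s)
      4^-1 * dsum M (fun K' i j => Fd n K' i j * sqnorm (ue n K' i j)) s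
  + \sum_(s | faceOf M K s) (if interior M s then
       \sum_(L | (L != K) && faceOf M L s)
         area M s * ((p n.+1 K + p n.+1 L) / 2) * dotn M (u n.+1 s) K s
     else 0)
  = vol M K * p n.+1 K * divu M (u n.+1) K.
Proof.
move=> lt_nN; rewrite vol_mul_divu -!big_split.
by apply: eq_bigr => s; apply: face_kinetic_balance.
Qed.

Lemma sum_Gk n K : (n <= N)%N ->
  \sum_(s | faceOf M K s) Gk M Fd ue n K s
  = \sum_(s | faceOf M K s)
      4^-1 * dsum M (fun K' i j => Fd n K' i j * sqnorm (ue n K' i j)) s.
Proof.
move=> le_nN; set G := fun K' i j => _.
have Gk_E s : Gk M Fd ue n K s = 4^-1 * dsum M G s - 2^-1 * dsumK M G K s.
  by rewrite /Gk /dsum [in RHS](bigD1 K) //=; field.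
rewrite (eq_bigr _ (fun s _ => Gk_E s)) sumrB -!mulr_sumr sum_dsumK.
rewrite sum_adj_antisym ?mulr0 ?subr0 // => i j ij.
  exact: (sol_dual_a sol).
by apply: eq_bigr => c _; rewrite (sol_ue_sym sol).
Qed.

Lemma Ssrc_succ n K :
  Ssrc M dt rho u Fd ue n.+1 K = \sum_(s | faceOf M K s) 2^-1 * \sum_(c < d) Rterm n s c.
Proof. by rewrite /Ssrc exchange_big mulr_sumr. Qed.

End Scheme.

Theorem mainTheorem4 (R : realFieldType) (d : nat) (Cell Face : finType)
  (M : mesh R d Cell Face) (T : R) (N : nat) (gamma : R)
  (rho e p : nat -> Cell -> R) (u : nat -> Face -> 'I_d -> R)
  (rhoS eS : nat -> Face -> R)
  (Fd : nat -> Cell -> 'I_(2 * d) -> 'I_(2 * d) -> R)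
  (ue : nat -> Cell -> 'I_(2 * d) -> 'I_(2 * d) -> 'I_d -> R)
  (g : nat -> Face -> R)
  (xi : 'I_(2 * d) -> 'I_(2 * d) -> 'I_(2 * d) -> R) :
  (1 <= d <= 3)%N -> 0 < T -> (2 <= N)%N -> 1 < gamma ->
  scheme_solution M (T / N%:R) N rho e p u rhoS eS Fd ue g xi gamma ->
  forall (n : nat) (K : Cell), (n <= N - 2)%N ->
    vol M K / (T / N%:R) *
      ((rho n.+2 K * e n.+2 K + rhoEk M rho u n.+1 K)
       - (rho n.+1 K * e n.+1 K + rhoEk M rho u n K))
    + \sum_(s | faceOf M K s)
        (F M u rhoS n.+1 K s * eS n.+1 s + Gk M Fd ue n K s)
    + \sum_(s | faceOf M K s && interior M s)
        \sum_(L | (L != K) && faceOf M L s)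
          area M s * ((p n.+1 K + p n.+1 L) / 2) * dotn M (u n.+1 s) K s
    = 0.
Proof.
move=> /andP[d_gt0 _] _ N_ge2 _ sol n K le_n.
set dt := T / N%:R in sol *.
have lt_nN : (n < N)%N by lia.
have lt_n1N : (n.+1 < N)%N by lia.
have := sol_energy sol K lt_n1N; rewrite Ssrc_succ.
have := cell_kinetic_balance sol d_gt0 K lt_nN.
have := rhoEk_diff M dt rho u n.+1 n K.
rewrite big_split /= (sum_Gk sol K (ltnW lt_nN)) big_mkcondr /=.
lra.
Qed.
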